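(* Consider a collective decentralized POMDP (CDec-POMDP) with $M$ agents, finite local state space $S$, finite action set $A$, horizon $H$, initial local-state distribution $b_o$, transition functions $\phi_t(i'\mid i,j,\mathbf{n}_{\mathbf{s}_t})$, count-based observations $o(i,\mathbf{n}_{\mathbf{s}_t})$, local rewards $r_t(i,j,\mathbf{n}_{\mathbf{s}_t})$, and a homogeneous parameterized policy $\pi_t(j\mid i,o(i,\mathbf{n}_{\mathbf{s}_t}))$ with parameter vector $\theta$ (all as described in the context). Then $$\nabla_\theta V_1(\pi)=\sum_{t=1}^H \mathbb{E}_{\mathbf{s}_t,\mathbf{a}_t\mid b_o,\pi}\Big[Q^\pi_t(\mathbf{s}_t,\mathbf{a}_t)\sum_{i\in S,\,j\in A} n_t(i,j)\,\nabla_\theta\log\pi_t\big(j\mid i,o(i,\mathbf{n}_{\mathbf{s}_t})\big)\Big].$$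
   Context: CDec-POMDP: there are $M$ agents; each agent $m$ has a local state $s^m_t\in S$ and action $a^m_t\in A$ at each time $t=1,\dots,H$. The joint state and joint action are $\mathbf{s}_t=(s^1_t,\dots,s^M_t)$, $\mathbf{a}_t=(a^1_t,\dots,a^M_t)$. Counts: $n_t(i)=|\{m: s^m_t=i\}|$, $n_t(i,j)=|\{m:(s^m_t,a^m_t)=(i,j)\}|$, $n_t(i,j,i')=|\{m:(s^m_t,a^m_t,s^m_{t+1})=(i,j,i')\}|$; the count table $\mathbf{n}_{\mathbf{s}_t}=(n_t(i))_{i\in S}$. Initial local states are drawn i.i.d. from $b_o$. At time $t$, an agent in state $i$ observes $(i,o(i,\mathbf{n}_{\mathbf{s}_t}))$ for a fixed observation function $o$, and all agents independently choose actions according to the common policy $\pi_t(j\mid i,o(i,\mathbf{n}_{\mathbf{s}_t}))$, which is differentiable in $\theta$ with positive probabilities. Each agent then independently moves to $i'$ with probability $\phi_t(i'\mid i,j,\mathbf{n}_{\mathbf{s}_t})$ and receives reward $r_t(i,j,\mathbf{n}_{\mathbf{s}_t})$. The joint reward is $r_t(\mathbf{s}_t,\mathbf{a}_t)=\sum_{m=1}^M r_t(s^m_t,a^m_t,\mathbf{n}_{\mathbf{s}_t})$. The action-value function is defined by $Q^\pi_H(\mathbf{s}_H,\mathbf{a}_H)=r_H(\mathbf{s}_H,\mathbf{a}_H)$ and $Q^\pi_t(\mathbf{s}_t,\mathbf{a}_t)=r_t(\mathbf{s}_t,\mathbf{a}_t)+\sum_{\mathbf{s}_{t+1},\mathbf{a}_{t+1}}P^\pi(\mathbf{s}_{t+1},\mathbf{a}_{t+1}\mid\mathbf{s}_t,\mathbf{a}_t)Q^\pi_{t+1}(\mathbf{s}_{t+1},\mathbf{a}_{t+1})$,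 and $V_1(\pi)=\mathbb{E}_{\mathbf{s}_1,\mathbf{a}_1\mid b_o,\pi}[Q^\pi_1(\mathbf{s}_1,\mathbf{a}_1)]=\sum_{m=1}^M\sum_{t=1}^H\mathbb{E}[r_t(s^m_t,a^m_t,\mathbf{n}_{\mathbf{s}_t})]$. The expectation $\mathbb{E}_{\mathbf{s}_t,\mathbf{a}_t\mid b_o,\pi}$ is over the marginal distribution of $(\mathbf{s}_t,\mathbf{a}_t)$ under this process, and $n_t(i,j)$ inside it is the count induced by $(\mathbf{s}_t,\mathbf{a}_t)$. *)

From HB Require Import structures.
From mathcomp Require Import all_boot all_order all_algebra.
From mathcomp Require Import all_classical all_reals all_analysis.
Set Implicit Arguments. Unset Strict Implicit. Unset Printing Implicit Defensive.
Import Order.TTheory GRing.Theory Num.Theory.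
Import numFieldNormedType.Exports.
Local Open Scope ring_scope.

(* Times t = 1..H (nat).
   Conventions for the primitive data:
     b0 i                     = b_o(i)
     phi t i j n i'           = phi_t(i' | i, j, n)
     r t i j n                = r_t(i, j, n)
     o i n                    = o(i, n)
     pi theta t i ob j        = pi_t(j | i, ob)   (parameter theta)          *)

Section CDec.
Variables (R : realType) (S A : finType) (Ob : Type) (M H d : nat).
Variable b0 : S -> R.
Variable phi : nat -> S -> A -> {ffun S -> nat} -> S -> R.
Variable r : nat -> S -> A -> {ffun S -> nat} -> R.
Variable o : S -> {ffun S -> nat} -> Ob.
Variable pi : 'rV[R]_d -> nat -> S -> Ob -> A -> R.

Definition jstate := {ffun 'I_M -> S}.
Definition jaction := {ffun 'I_M -> A}.

Definition cnt (s : jstate) : {ffun S -> nat} :=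
  [ffun i => #|[set m | s m == i]|].
Definition cnt2 (s : jstate) (a : jaction) (i : S) (j : A) : nat :=
  #|[set m | (s m == i) && (a m == j)]|.

Definition jrew (t : nat) (s : jstate) (a : jaction) : R :=
  \sum_(m < M) r t (s m) (a m) (cnt s).

Definition jpol (theta : 'rV[R]_d) (t : nat) (s : jstate) (a : jaction) : R :=
  \prod_(m < M) pi theta t (s m) (o (s m) (cnt s)) (a m).

Definition jtrans (theta : 'rV[R]_d) (t : nat) (s : jstate) (a : jaction)
  (s' : jstate) (a' : jaction) : R :=
  (\prod_(m < M) phi t (s m) (a m) (cnt s) (s' m)) * jpol theta t.+1 s' a'.

(* Q^pi via k remaining steps: Qrec k t = Q_t when k = H - t *)
Fixpoint Qrec (theta : 'rV[R]_d) (k t : nat) (s : jstate) (a : jaction) : R :=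
  jrew t s a +
  match k with
  | 0 => 0
  | k'.+1 => \sum_(s' : jstate) \sum_(a' : jaction)
               jtrans theta t s a s' a' * Qrec theta k' t.+1 s' a'
  end.

Definition Q (theta : 'rV[R]_d) (t : nat) (s : jstate) (a : jaction) : R :=
  Qrec theta (H - t) t s a.

(* marginal distribution of (s_{k+1}, a_{k+1}) *)
Fixpoint margk (theta : 'rV[R]_d) (k : nat) (s : jstate) (a : jaction) : R :=
  match k with
  | 0 => (\prod_(m < M) b0 (s m)) * jpol theta 1 s a
  | k'.+1 => \sum_(s0 : jstate) \sum_(a0 : jaction)
               margk theta k' s0 a0 * jtrans theta k'.+1 s0 a0 s a
  end.

(* P(s_t = s, a_t = a | b_o, pi), for t >= 1 *)
Definition marg (theta : 'rV[R]_d) (t : nat) (s : jstate) (a : jaction) : R :=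
  margk theta t.-1 s a.

Definition Expect (theta : 'rV[R]_d) (t : nat) (f : jstate -> jaction -> R) : R :=
  \sum_(s : jstate) \sum_(a : jaction) marg theta t s a * f s a.

Definition V1 (theta : 'rV[R]_d) : R := Expect theta 1 (Q theta 1).

End CDec.

Definition ecoord (R : realType) (d : nat) (k : 'I_d) : 'rV[R]_d := delta_mx 0 k.
Arguments ecoord : clear implicits.

From mathcomp Require Import all_boot all_order all_algebra.
From mathcomp Require Import all_classical all_reals all_analysis.
From mathcomp Require Import ring.
Import GRing.Theory Num.Theory.
Import numFieldNormedType.Exports.
Local Open Scope ring_scope.

(* The joint policy is a product of the agents' local policies, so its
   logarithmic derivative is the sum of the local scores, which regroups by the
   counts n_t(i,j) into [score].  Differentiating the Bellman recursion
   Q_t = r_t + P^pi Q_{t+1} gives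
     grad Q_t = E[ Q_{t+1} score_{t+1} + grad Q_{t+1} | s_t, a_t ],
   and since the marginal of (s_t, a_t) is propagated by the same kernel P^pi,
   taking expectations and telescoping leaves one term per time step. *)

Section DirectionalDerivatives.
Context {R : realType} {V : normedModType R}.
Implicit Types (f g : V -> R) (x v : V).

Lemma is_derive_bigsum {I : Type} (s : seq I) (P : pred I) {h : I -> V -> R}
    {dh : I -> R} {x v} :
  (forall i, P i -> is_derive x v (h i) (dh i)) ->
  is_derive x v (fun y => \sum_(i <- s | P i) h i y) (\sum_(i <- s | P i) dh i).
Proof.
move=> hd; rewrite -fct_sumE.
by elim/big_ind2: _ => // [|f df g dg]; [exact: is_derive_cst | exact: is_deriveD].
Qed.

Lemma is_derive_mul {f g x v df dg} :
  is_derive x v f df -> is_derive x v g dg ->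
  is_derive x v (fun y => f y * g y) (df * g x + f x * dg).
Proof.
move=> hf hg; have /is_derive_eq := is_deriveM hf hg.
by apply; rewrite addrC mulrC.
Qed.

Lemma is_derive_mull c {f x v df} :
  is_derive x v f df -> is_derive x v (fun y => c * f y) (c * df).
Proof. exact: is_deriveZ. Qed.

Lemma is_derive_prod {I : Type} (s : seq I) {h : I -> V -> R} {dh : I -> R} {x v} :
  (forall i, is_derive x v (h i) (dh i)) -> (forall i, h i x != 0) ->
  is_derive x v (fun y => \prod_(i <- s) h i y)
    ((\prod_(i <- s) h i x) * \sum_(i <- s) dh i / h i x).
Proof.
move=> hd hn; elim: s => [|i s IH].
  rewrite !big_nil mulr0; under eq_fun do rewrite big_nil; exact: is_derive_cst.
under eq_fun do rewrite big_cons.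
have /is_derive_eq := is_derive_mul (hd i) IH.
by apply; rewrite !big_cons; move: (hn i) => hi; field.
Qed.

Lemma is_derive_ln {f x} v : differentiable f x -> 0 < f x ->
  is_derive x v (fun y => ln (f y)) ('D_v f x / f x).
Proof.
move=> df fx_gt0.
have dln : differentiable (@ln R) (f x).
  by apply/derivable1_diffP; apply: ex_derive; exact: is_derive1_ln.
have dlnf : differentiable (@ln R \o f) x by exact: differentiable_comp.
apply: DeriveDef; first exact: diff_derivable.
rewrite (deriveE _ dlnf) diff_comp //= deriv1E; last exact/derivable1_diffP.
by rewrite -deriveE // derive1E; have [_ ->] := is_derive1_ln fx_gt0.
Qed.

End DirectionalDerivatives.

Lemma sum_agents_by_count (R : pzSemiRingType) (S A : finType) (M : nat)
    (F : S -> A -> R) (s : jstate S M) (a : jaction A M) :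
  \sum_(m < M) F (s m) (a m) = \sum_i \sum_j (cnt2 s a i j)%:R * F i j.
Proof.
have count_as_sum i j : (cnt2 s a i j)%:R * F i j =
    \sum_(m < M) (if (s m == i) && (a m == j) then F i j else 0).
  rewrite -big_mkcond /= sumr_const mulr_natl /cnt2.
  by congr (_ *+ _); apply: eq_card => m; rewrite inE.
under [RHS]eq_bigr do under eq_bigr do rewrite count_as_sum.
under [RHS]eq_bigr do rewrite exchange_big.
rewrite exchange_big /=; apply: eq_bigr => m _.
rewrite (bigD1 (s m)) //= [X in _ + X]big1 ?addr0; last first.
  by move=> i /negbTE ne; apply: big1 => j _; rewrite eq_sym ne.
rewrite (bigD1 (a m)) //= !eqxx [X in _ + X]big1 ?addr0 //.
by move=> j /negbTE ne; rewrite eq_sym ne andbF.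
Qed.

Section PolicyGradient.
Variables (R : realType) (S A : finType) (Ob : Type) (M d : nat).
Variables (b0 : S -> R) (phi : nat -> S -> A -> {ffun S -> nat} -> S -> R).
Variables (r : nat -> S -> A -> {ffun S -> nat} -> R) (o : S -> {ffun S -> nat} -> Ob).
Variable pi : 'rV[R]_d -> nat -> S -> Ob -> A -> R.
Hypothesis pi_gt0 : forall theta t i ob j, 0 < pi theta t i ob j.
Hypothesis pi_differentiable : forall theta t i ob j,
  differentiable (fun th : 'rV[R]_d => pi th t i ob j) theta.
Variables (theta v : 'rV[R]_d).

Local Notation JS := (jstate S M).
Local Notation JA := (jaction A M).
Local Notation Pol := (jpol o pi).
Local Notation Trans := (jtrans phi o pi).
Local Notation Qr := (Qrec phi r o pi).
Local Notation E := (Expect b0 phi o pi).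

Definition score (t : nat) (s : JS) (a : JA) : R :=
  \sum_i \sum_j (cnt2 s a i j)%:R *
    'D_v (fun th : 'rV[R]_d => ln (pi th t i (o i (cnt s)) j)) theta.

Lemma is_derive_jpol t s a :
  is_derive theta v (fun th => Pol th t s a) (Pol theta t s a * score t s a).
Proof.
pose h m th := pi th t (s m) (o (s m) (cnt s)) (a m).
have dh m : is_derive theta v (h m) ('D_v (h m) theta).
  exact/derivableP/diff_derivable/pi_differentiable.
have h_neq0 m : h m theta != 0 by apply/lt0r_neq0/pi_gt0.
have /is_derive_eq := is_derive_prod (index_enum _) dh h_neq0.
apply; congr (_ * _); rewrite /score -sum_agents_by_count; apply: eq_bigr => m _.
have pi_m_gt0 := pi_gt0 theta t (s m) (o (s m) (cnt s)) (a m).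
by have [_ ->] := is_derive_ln v (pi_differentiable _ _ _ _ _) pi_m_gt0.
Qed.

Lemma is_derive_jtrans t s a s' a' :
  is_derive theta v (fun th => Trans th t s a s' a')
    (Trans theta t s a s' a' * score t.+1 s' a').
Proof.
by rewrite /jtrans -mulrA; apply: is_derive_mull; exact: is_derive_jpol.
Qed.

Lemma is_derive_QrecS n t s a :
  (forall (s' : JS) (a' : JA), derivable (fun th => Qr th n t.+1 s' a') theta v) ->
  is_derive theta v (fun th => Qr th n.+1 t s a)
    (\sum_(s' : JS) \sum_(a' : JA) Trans theta t s a s' a' *
       (Qr theta n t.+1 s' a' * score t.+1 s' a' + 'D_v (fun th => Qr th n t.+1 s' a') theta)).
Proof.
move=> dQ.
have -> : (fun th => Qr th n.+1 t s a) = cst (jrew r t s a) +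
    fun th => \sum_(s' : JS) \sum_(a' : JA) Trans th t s a s' a' * Qr th n t.+1 s' a'.
  by [].
rewrite -[X in is_derive _ _ _ X]add0r; apply: is_deriveD.
apply: is_derive_bigsum => s' _; apply: is_derive_bigsum => a' _.
have /is_derive_eq := is_derive_mul (is_derive_jtrans t s a s' a') (derivableP (dQ s' a')).
by apply; rewrite mulrDr mulrA mulrAC.
Qed.

Lemma derivable_Qrec n t (s : JS) (a : JA) : derivable (fun th => Qr th n t s a) theta v.
Proof.
elim: n t s a => [|n IH] t s a.
  have -> : (fun th => Qr th 0 t s a) = cst (jrew r t s a + 0) by [].
  exact: derivable_cst.
by have [] := is_derive_QrecS n t s a (IH t.+1).
Qed.

Lemma derive_QrecS n t s a :
  'D_v (fun th => Qr th n.+1 t s a) theta =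
    \sum_(s' : JS) \sum_(a' : JA) Trans theta t s a s' a' *
       (Qr theta n t.+1 s' a' * score t.+1 s' a' + 'D_v (fun th => Qr th n t.+1 s' a') theta).
Proof. by have [] := is_derive_QrecS n t s a (fun s' a' => derivable_Qrec n t.+1 s' a'). Qed.

Lemma derive_Qrec0 t (s : JS) (a : JA) : 'D_v (fun th => Qr th 0 t s a) theta = 0.
Proof.
have -> : (fun th => Qr th 0 t s a) = cst (jrew r t s a + 0) by [].
exact: derive_cst.
Qed.

Lemma ExpectD th t (f g : JS -> JA -> R) :
  E th t (fun s a => f s a + g s a) = E th t f + E th t g.
Proof.
rewrite -big_split; apply: eq_bigr => s _.
by rewrite -big_split; apply: eq_bigr => a _; rewrite mulrDr.
Qed.

Lemma Expect_jtrans k (g : JS -> JA -> R) :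
  E theta k.+1
    (fun s a => \sum_(s' : JS) \sum_(a' : JA) Trans theta k.+1 s a s' a' * g s' a') =
  E theta k.+2 g.
Proof.
rewrite /Expect /marg /= pair_big [RHS]pair_big /=.
under eq_bigr => p _ do rewrite pair_big /= mulr_sumr.
under [RHS]eq_bigr => p _ do rewrite pair_big /= mulr_suml.
rewrite exchange_big; apply: eq_bigr => p' _; apply: eq_bigr => p _.
by rewrite mulrA.
Qed.

Local Notation QH H := (@Q R S A Ob M H d phi r o pi).

Lemma Expect_derive_Q H k : (k < H)%N ->
  E theta k.+1 (fun s a => 'D_v (fun th => QH H th k.+1 s a) theta) =
  \sum_(k.+2 <= u < H.+1) E theta u (fun s a => QH H theta u s a * score u s a).
Proof.
move=> /subnK <-; move: (H - k.+1)%N => n; elim: n k => [|n IH] k.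
  rewrite add0n big_geq // /Q subnn.
  by apply: big1 => s _; apply: big1 => a _; rewrite derive_Qrec0 mulr0.
rewrite addSnnS big_ltn; last by rewrite ltnS leq_addl.
rewrite -IH /Q addnK -addSnnS addnK.
rewrite -ExpectD -Expect_jtrans; apply: eq_bigr => s _; apply: eq_bigr => a _.
by rewrite derive_QrecS.
Qed.

Lemma is_derive_marg1 (s : JS) (a : JA) :
  is_derive theta v (fun th => marg b0 phi o pi th 1 s a)
    (marg b0 phi o pi theta 1 s a * score 1 s a).
Proof.
by rewrite /marg /= -mulrA; apply: is_derive_mull; exact: is_derive_jpol.
Qed.

Lemma policy_gradient H : (0 < H)%N ->
  'D_v (V1 M H b0 phi r o pi) theta =
  \sum_(1 <= t < H.+1) E theta t (fun s a => QH H theta t s a * score t s a).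
Proof.
move=> H_gt0.
have dV1 : is_derive theta v (V1 M H b0 phi r o pi)
    (E theta 1 (fun s a => QH H theta 1 s a * score 1 s a) +
     E theta 1 (fun s a => 'D_v (fun th => QH H th 1 s a) theta)).
  rewrite -ExpectD; apply: is_derive_bigsum => s _; apply: is_derive_bigsum => a _.
  have dQ1 := derivableP (derivable_Qrec (H - 1) 1 s a).
  have /is_derive_eq := is_derive_mul (is_derive_marg1 s a) dQ1.
  by apply; rewrite mulrDr mulrAC mulrA.
have [_ ->] := dV1.
by rewrite Expect_derive_Q // [RHS]big_ltn // ltnS.
Qed.

End PolicyGradient.

Theorem theorem1 (R : realType) (S A : finType) (Ob : Type) (M H d : nat)
  (b0 : S -> R)
  (phi : nat -> S -> A -> {ffun S -> nat} -> S -> R)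
  (r : nat -> S -> A -> {ffun S -> nat} -> R)
  (o : S -> {ffun S -> nat} -> Ob)
  (pi : 'rV[R]_d -> nat -> S -> Ob -> A -> R)
  (hH : (1 <= H)%N)
  (hb0_ge0 : forall i, 0 <= b0 i)
  (hb0_sum : \sum_(i : S) b0 i = 1)
  (hphi_ge0 : forall t i j n i', 0 <= phi t i j n i')
  (hphi_sum : forall t i j n, \sum_(i' : S) phi t i j n i' = 1)
  (hpi_pos : forall theta t i ob j, 0 < pi theta t i ob j)
  (hpi_sum : forall theta t i ob, \sum_(j : A) pi theta t i ob j = 1)
  (hpi_diff : forall theta t i ob j,
     differentiable (fun th : 'rV[R]_d => pi th t i ob j) theta)
  (theta : 'rV[R]_d) :
  forall k : 'I_d,
    'D_(ecoord R d k) (V1 M H b0 phi r o pi) theta =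
    \sum_(1 <= t < H.+1)
      @Expect R S A Ob M d b0 phi o pi theta t
        (fun s a =>
           Q H phi r o pi theta t s a *
           \sum_(i : S) \sum_(j : A)
              (cnt2 s a i j)%:R *
              'D_(ecoord R d k)
                 (fun th : 'rV[R]_d => ln (pi th t i (o i (cnt s)) j)) theta).
Proof. by move=> k; exact: policy_gradient. Qed.
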